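(* Each of the following graphs is not strongly EFX-orientable: (i) the union of two odd cycles that share exactly one edge (and no other vertices); (ii) the union of two odd cycles that share exactly one vertex; (iii) the union of two vertex-disjoint odd cycles $C$ and $C'$ together with a path of length at least $1$ from a vertex of $C$ to a vertex of $C'$ whose internal vertices lie on neither cycle.
   Context: All graphs are finite and simple. For a graph $G=(V,E)$ and $v\in V$, $E(v)$ is the set of edges incident to $v$. A graphical instance on $G$ assigns to each vertex $v$ a valuation $f_v:2^E\to\mathbb{R}_{\ge 0}$ that is monotone ($A\subseteq B\Rightarrow f_v(A)\le f_v(B)$) and satisfies $f_v(X)=f_v(X\cap E(v))$ for all $X\subseteq E$. An orientation of $G$ chooses for each edge one of its endpoints as its head; vertex $v$ receives the bundle $X_v$ of edges whose head is $v$. The orientation is EFX if for all $u,v\in V$ and every $g\in X_v$, $f_u(X_u)\ge f_u(X_v\setminus\{g\})$. A graph $G$ is strongly EFX-orientable if for every graphical instance on $G$ there exists an EFX orientation. *)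

From HB Require Import structures.
From mathcomp Require Import all_boot all_order all_algebra.
From mathcomp Require Import reals.
Set Implicit Arguments. Unset Strict Implicit. Unset Printing Implicit Defensive.
Import Order.TTheory GRing.Theory Num.Theory.
Local Open Scope ring_scope.

Section Graphs.
Variable T : finType.

(* A finite simple graph is given by a symmetric irreflexive relation e on T;
   its edges are the 2-element sets {x, y} with e x y. *)
Definition edges (e : rel T) : {set {set T}} :=
  [set [set q.1; q.2] | q : T * T & e q.1 q.2].

Definition inc_edges (e : rel T) (v : T) : {set {set T}} :=
  [set a in edges e | v \in a].

Definition is_cycle (e : rel T) (c : seq T) : bool :=
  [&& cycle e c, uniq c & 3 <= size c]%N.

Definition cycle_edges (c : seq T) : {set {set T}} :=
  [set [set q.1; q.2] | q in zip c (rot 1 c)].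

Definition cycle_verts (c : seq T) : {set T} := [set x in c].

Definition path_edges (x : T) (p : seq T) : {set {set T}} :=
  [set [set q.1; q.2] | q in zip (x :: p) p].

Definition two_odd_cycles_share_edge (e : rel T) : Prop :=
  exists c1 c2 : seq T, exists a : {set T},
    [/\ is_cycle e c1, is_cycle e c2, odd (size c1) & odd (size c2)] /\
    [/\         cycle_edges c1 :&: cycle_edges c2 = [set a],
        cycle_verts c1 :&: cycle_verts c2 = a,
        edges e = cycle_edges c1 :|: cycle_edges c2 &
        forall v : T, v \in cycle_verts c1 :|: cycle_verts c2].

Definition two_odd_cycles_share_vertex (e : rel T) : Prop :=
  exists c1 c2 : seq T, exists w : T,
    [/\ is_cycle e c1, is_cycle e c2, odd (size c1) & odd (size c2)] /\
    [/\         cycle_verts c1 :&: cycle_verts c2 = [set w],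
        edges e = cycle_edges c1 :|: cycle_edges c2 &
        forall v : T, v \in cycle_verts c1 :|: cycle_verts c2].

(* (iii) two vertex-disjoint odd cycles joined by a path x :: p of length
   size p >= 1 from x on c1 to last x p on c2, internal vertices off both. *)
Definition two_odd_cycles_joined_by_path (e : rel T) : Prop :=
  exists c1 c2 : seq T, exists x : T, exists p : seq T,
    [/\ is_cycle e c1, is_cycle e c2, odd (size c1) & odd (size c2)] /\
    [/\         cycle_verts c1 :&: cycle_verts c2 = set0,
        [/\ path e x p, uniq (x :: p) & (1 <= size p)%N] /\
        [/\ x \in c1, last x p \in c2 &
            all (fun v => (v \notin c1) && (v \notin c2)) (behead (belast x p))],
        edges e = cycle_edges c1 :|: cycle_edges c2 :|: path_edges x p &
        forall v : T, v \in cycle_verts c1 :|: cycle_verts c2 :|: [set y in x :: p]].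

Variable R : realType.

(* Valuations are functions on {set {set T}} but all
   requirements (and their use) concern only subsets of edges e. *)
Definition graphical_instance (e : rel T) (f : T -> {set {set T}} -> R) : Prop :=
  forall v : T,
    [/\ forall A : {set {set T}}, A \subset edges e -> 0 <= f v A,
        forall A B : {set {set T}}, A \subset B -> B \subset edges e ->
          f v A <= f v B &
        forall X : {set {set T}}, X \subset edges e ->
          f v X = f v (X :&: inc_edges e v)].

Definition orientation (e : rel T) (o : {set T} -> T) : Prop :=
  forall a, a \in edges e -> o a \in a.

Definition bundle (e : rel T) (o : {set T} -> T) (v : T) : {set {set T}} :=
  [set a in edges e | o a == v].

Definition EFX_orientation (e : rel T) (f : T -> {set {set T}} -> R)
    (o : {set T} -> T) : Prop :=
  orientation e o /\
  forall u v : T, forall g, g \in bundle e o v ->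
    f u (bundle e o v :\ g) <= f u (bundle e o u).

Definition strongly_EFX_orientable (e : rel T) : Prop :=
  forall f : T -> {set {set T}} -> R, graphical_instance e f ->
    exists o : {set T} -> T, EFX_orientation e f o.

End Graphs.

From HB Require Import structures.
From mathcomp Require Import all_boot all_order all_algebra.
From mathcomp Require Import reals.
From mathcomp Require Import zify.

Set Implicit Arguments. Unset Strict Implicit. Unset Printing Implicit Defensive.
Import Order.TTheory GRing.Theory Num.Theory.

(* The obstructions use valuations in which each vertex values one favourite
   incident edge at 2, possibly some further edges at 1 and all others at 0.
   Under EFX, whoever owns an edge coveted by one of its endpoints (valued by it
   above its whole bundle) owns nothing else. Pair the vertices of an odd cycle
   other than a hub w along the cycle, each pair favouring the edge between
   them: then no paired vertex owns two cycle edges, and walking around the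
   cycle shows that w owns a cycle edge. Alternatively, let w value exactly the
   cycle edges and let its two cycle neighbours favour their edges to w: if w
   owned an edge off the cycle it would covet both of its cycle edges, and the
   same walk gives a contradiction. Applying these gadgets to both odd cycles,
   hubbed at the shared edge, the shared vertex or the ends of the path (whose
   vertices are paired consecutively), some vertex is forced to own two edges
   one of which is coveted. *)

Definition mate (k : nat) : nat := if odd k then k.-1 else k.+1.

Lemma mateK : involutive mate.
Proof. by move=> [|k] //; rewrite /mate /=; case ok: (odd k) => /=; rewrite ?ok. Qed.

Lemma mate_adjacent k : mate k = k.+1 \/ k = (mate k).+1.
Proof. by rewrite /mate; case: k => [|k] /=; [left | case: (odd k); [left | right]]. Qed.

Lemma mate_neq k : mate k != k.
Proof. by apply/eqP; case: (mate_adjacent k); lia. Qed.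

Lemma mate_lt n k : ~~ odd n -> k < n -> mate k < n.
Proof.
rewrite /mate => ev kn; case: ifP => ok; first by rewrite (leq_ltn_trans (leq_pred k)).
by rewrite ltn_neqAle kn andbT; apply: contraNneq ev => <-; rewrite /= ok.
Qed.

Section SeqEdges.
Variable T : finType.
Implicit Types (s : seq T) (x w : T).

Definition seq_edges s : {set {set T}} := [set [set q.1; q.2] | q in zip s (behead s)].

Lemma seq_edges_nth x0 s i : i.+1 < size s ->
  [set nth x0 s i; nth x0 s i.+1] \in seq_edges s.
Proof.
move=> iS; have iz : i < size (zip s (behead s)) by rewrite size_zip size_behead; lia.
apply/imsetP; exists (nth (x0, x0) (zip s (behead s)) i); first exact: mem_nth.
by rewrite nth_zip_cond iz /= nth_behead.
Qed.

Lemma seq_edgesP x0 s g : g \in seq_edges s ->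
  exists2 i, i.+1 < size s & g = [set nth x0 s i; nth x0 s i.+1].
Proof.
case/imsetP => q qin ->; set i := index q (zip s (behead s)).
have iz : i < size (zip s (behead s)) by rewrite index_mem.
move: iz; rewrite size_zip size_behead => iz.
exists i; first by lia.
rewrite -(nth_index (x0, x0) qin) nth_zip_cond size_zip size_behead.
by rewrite ifT ?nth_behead //; lia.
Qed.

Lemma seq_edges_catl s t : seq_edges s \subset seq_edges (s ++ t).
Proof.
case: s => [|x0 s]; first by apply/subsetP => g /imsetP[].
apply/subsetP => g /(seq_edgesP x0)[i iS ->].
have nthE j : j < size (x0 :: s) -> nth x0 (x0 :: s) j = nth x0 ((x0 :: s) ++ t) j.
  by move=> js; rewrite nth_cat js.
by rewrite !nthE ?(ltnW iS) //; apply: seq_edges_nth; rewrite size_cat; lia.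
Qed.

Lemma seq_edges_catr s t : seq_edges t \subset seq_edges (s ++ t).
Proof.
case: t => [|x0 t]; first by apply/subsetP => g /imsetP[].
apply/subsetP => g /(seq_edgesP x0)[i iS ->].
have nthE j : nth x0 (x0 :: t) j = nth x0 (s ++ x0 :: t) (size s + j).
  by rewrite nth_cat ltnNge leq_addr /= addKn.
by rewrite !nthE addnS; apply: seq_edges_nth; move: iS; rewrite size_cat /=; lia.
Qed.

Lemma mem_interior x p k : 0 < k < size p -> nth x (x :: p) k \in behead (belast x p).
Proof.
case/andP => k0 kp; rewrite lastI nth_rcons size_belast kp.
by case: p kp => [|z q] //= kq; rewrite -(prednK k0) /= mem_nth // size_belast -ltnS prednK.
Qed.
End SeqEdges.

Section Partner.
Variable T : finType.
Implicit Types (s : seq T) (v : T).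

Definition partner s v : T := nth v s (mate (index v s)).

Lemma partner_nth x0 s k : uniq s -> k < size s -> mate k < size s ->
  partner s (nth x0 s k) = nth x0 s (mate k).
Proof. by move=> Us ks mks; rewrite /partner index_uniq // (set_nth_default x0). Qed.

Lemma partner_spec s v : uniq s -> ~~ odd (size s) -> v \in s ->
  [/\ partner s v \in s, partner s v != v, partner s (partner s v) = v
    & [set v; partner s v] \in seq_edges s].
Proof.
move=> Us ev vs; set k := index v s; have ks : k < size s by rewrite index_mem.
have mks : mate k < size s by exact: mate_lt.
have vE : nth v s k = v by rewrite nth_index.
have pvE : partner s v = nth v s (mate k) by rewrite -{1}vE partner_nth.
rewrite pvE; split.
- exact: mem_nth.
- by rewrite -{2}vE nth_uniq // mate_neq.
- by rewrite partner_nth ?mateK.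
case: (mate_adjacent k) => E; rewrite -{1}vE.
  by rewrite E; apply: seq_edges_nth; rewrite -E.
by rewrite {1}E setUC; apply: seq_edges_nth; rewrite -E.
Qed.
End Partner.

Section Cycles.
Variables (T : finType) (e : rel T).
Implicit Types (c r s : seq T) (g : {set T}) (v w x : T).

Lemma edge_of_rel x y : e x y -> [set x; y] \in edges e.
Proof. by move=> exy; apply/imsetP; exists (x, y); rewrite ?inE. Qed.

Lemma set0_notin_edges : set0 \notin edges e.
Proof.
apply/negP => /imsetP[q _ E].
have : q.1 \in (set0 : {set T}) by rewrite E !inE eqxx.
by rewrite inE.
Qed.

Lemma cycle_edges_next c : uniq c ->
  cycle_edges c = [set [set x; next c x] | x in c].
Proof.
move=> Uc; have zipE : zip c (rot 1 c) = [seq (x, next c x) | x <- c].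
  case: c Uc => [|y p] // U; rewrite rot1_cons.
  apply: (@eq_from_nth _ (y, y)); first by rewrite size_zip size_map size_rcons minnn.
  move=> i; rewrite size_zip size_rcons /= minnn => ip.
  rewrite nth_zip ?size_rcons // -[_ :: map _ _]/(map (fun x => (x, next (y :: p) x)) (y :: p)).
  rewrite (nth_map y) //.
  by rewrite next_nth mem_nth // index_uniq // nth_rcons_default.
rewrite /cycle_edges zipE; apply/setP => g.
apply/imsetP/imsetP => [[q /mapP[x xc ->] ->]|[x xc ->]]; first by exists x.
by exists (x, next c x) => //; apply/mapP; exists x.
Qed.

Lemma mem_cycle_edges c g z : uniq c -> g \in cycle_edges c -> z \in g -> z \in c.
Proof.
move=> Uc; rewrite cycle_edges_next // => /imsetP[x xc ->].
by rewrite !inE => /orP[]/eqP->; rewrite ?mem_next.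
Qed.

Lemma cycle_edges_sub c : is_cycle e c -> cycle_edges c \subset edges e.
Proof.
case/and3P=> cy Uc _; apply/subsetP => g.
by rewrite cycle_edges_next // => /imsetP[x xc ->]; apply/edge_of_rel/next_cycle.
Qed.

Lemma cycle_edges_deg2 c v g1 g2 g3 : uniq c ->
  g1 \in cycle_edges c -> g2 \in cycle_edges c -> g3 \in cycle_edges c ->
  v \in g1 -> v \in g2 -> v \in g3 -> [|| g1 == g2, g1 == g3 | g2 == g3].
Proof.
move=> Uc.
have at_v g : g \in cycle_edges c -> v \in g ->
    (g == [set v; next c v]) || (g == [set prev c v; v]).
  rewrite cycle_edges_next // => /imsetP[x xc ->]; rewrite !inE => /orP[]/eqP->.
    by rewrite eqxx.
  by rewrite prev_next // eqxx orbT.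
move=> /at_v h1 /at_v h2 /at_v h3 /h1 {}h1 /h2 {}h2 /h3 {}h3.
by case/orP: h1 => /eqP->; case/orP: h2 => /eqP->; case/orP: h3 => /eqP->;
  rewrite ?eqxx ?orbT.
Qed.

Lemma cycle_edges_nth w r i : uniq (w :: r) -> i < (size r).+1 ->
  [set nth w (w :: r) i; nth w (w :: r) i.+1] \in cycle_edges (w :: r).
Proof.
move=> U ir; rewrite cycle_edges_next //; apply/imsetP.
exists (nth w (w :: r) i); first by rewrite mem_nth.
by rewrite next_nth mem_nth // index_uniq.
Qed.

Lemma cycle_edges_head_last w r : uniq (w :: r) ->
  [set w; head w r] \in cycle_edges (w :: r) /\ [set last w r; w] \in cycle_edges (w :: r).
Proof.
move=> U; rewrite cycle_edges_next //; split; apply/imsetP.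
  by exists w; rewrite ?mem_head //; case: r {U} => [|y r] /=; rewrite eqxx.
exists (prev (w :: r) w); rewrite ?next_prev ?mem_prev ?mem_head //.
case/andP: U => wr _; by rewrite prev_nth mem_head (memNindex wr) -last_nth.
Qed.

Lemma seq_edges_sub_cycle w r : uniq (w :: r) ->
  seq_edges r \subset cycle_edges (w :: r).
Proof.
move=> U; apply/subsetP => g /(seq_edgesP w)[i ir ->].
exact: (cycle_edges_nth (i := i.+1) U (ltnW ir)).
Qed.

Lemma cycle_rot c w : is_cycle e c -> w \in c ->
  exists r, [/\ is_cycle e (w :: r), size (w :: r) = size c,
                cycle_edges (w :: r) = cycle_edges c & w :: r =i c].
Proof.
move=> /and3P[cy Uc Sc] wc; have := rot_index wc; set r := (_ ++ _) => E.
exists r; rewrite -E; split.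
- by rewrite /is_cycle rot_cycle rot_uniq size_rot cy Uc Sc.
- by rewrite size_rot.
- rewrite !cycle_edges_next ?rot_uniq //; apply/setP => g.
  by apply/imsetP/imsetP => [][x xc ->]; exists x; rewrite ?mem_rot ?next_rot // in xc *.
- by move=> z; rewrite mem_rot.
Qed.

Lemma odd_cycle_rot c w : is_cycle e c -> odd (size c) -> w \in c ->
  exists r, [/\ is_cycle e (w :: r), ~~ odd (size r),
                cycle_edges (w :: r) = cycle_edges c & w :: r =i c].
Proof.
move=> cy oc wc; have [r [cyr Sr CEr Mr]] := cycle_rot cy wc.
by exists r; split => //; move: oc; rewrite -Sr.
Qed.

Lemma odd_cycle_spokes c w : is_cycle e c -> odd (size c) -> w \in c ->
  exists a m b, [/\ is_cycle e (w :: a :: rcons m b), ~~ odd (size m),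
      cycle_edges (w :: a :: rcons m b) = cycle_edges c & w :: a :: rcons m b =i c].
Proof.
move=> cy oc wc; have [r [cyr evr CEr Mr]] := odd_cycle_rot cy oc wc.
case: r cyr evr CEr Mr => [|a [|y t]]; first by case/and3P.
  by case/and3P.
case/lastP: {y t}(y :: t) => [|m b] cyr evr CEr Mr; first by case/and3P: cyr.
by exists a, m, b; split => //; move: evr; rewrite /= size_rcons /= negbK.
Qed.

Lemma set2_shift_neq x y z : x != y -> x != z -> [set x; y] != [set y; z].
Proof.
move=> xy xz; apply/eqP => E; have : x \in [set y; z] by rewrite -E !inE eqxx.
by rewrite !inE (negbTE xy) (negbTE xz).
Qed.

Lemma mem_spokes w a m b z :
  (z \in w :: a :: rcons m b) = [|| z == w, z == a, z == b | z \in m].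
Proof. by rewrite !in_cons mem_rcons in_cons. Qed.

Lemma uniq_spokes w a m b : uniq (w :: a :: rcons m b) ->
  [/\ a != w, b != w, a != b, [/\ w \notin m, a \notin m & b \notin m] & uniq m].
Proof.
rewrite /= in_cons !mem_rcons rcons_uniq !in_cons !negb_or.
by case/and4P=> /and3P[wa wb wm] /andP[ab am] bm Um; rewrite ![_ == w]eq_sym.
Qed.

Lemma seq_edges_sub_spokes w a m b : uniq (w :: a :: rcons m b) ->
  seq_edges m \subset cycle_edges (w :: a :: rcons m b).
Proof.
move=> U; apply: subset_trans (seq_edges_sub_cycle U).
rewrite -cats1 -[a :: _]/([:: a] ++ (m ++ [:: b])).
exact: subset_trans (seq_edges_catl m [:: b]) (seq_edges_catr [:: a] _).
Qed.

Hypothesis eirr : irreflexive e.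

Lemma edge_not_sub1 g w : g \in edges e -> ~~ (g \subset [set w]).
Proof.
case/imsetP => q; rewrite inE => eq ->; apply/negP => /subsetP sub.
have := sub q.1; have := sub q.2; rewrite !inE !eqxx orbT => /(_ isT)/eqP E2 /(_ isT)/eqP E1.
by move: eq; rewrite E1 E2 eirr.
Qed.
End Cycles.

Section TieredValuation.
Variables (T : finType) (e : rel T) (R : realType).
Variables (top : T -> {set T}) (sec : T -> {set {set T}}).

Definition weight (v : T) (g : {set T}) : nat :=
  if g == top v then 2 else if g \in sec v then 1 else 0.

Definition tiered_valuation (v : T) (S : {set {set T}}) : R :=
  (\max_(g in S :&: inc_edges e v) weight v g)%:R.

Lemma tiered_valuation_graphical : graphical_instance e tiered_valuation.
Proof.
move=> v; split.
- by move=> A _; apply: ler0n.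
- move=> A B AB _; rewrite /tiered_valuation ler_nat; apply/bigmax_leqP => g.
  rewrite !inE => /andP[gA gv]; apply: leq_bigmax_cond.
  by rewrite !inE (subsetP AB _ gA).
- by move=> X _; rewrite /tiered_valuation -setIA setIid.
Qed.

Variable o : {set T} -> T.
Hypothesis efx : EFX_orientation e tiered_valuation o.

Definition owns (g : {set T}) (v : T) : bool := (g \in edges e) && (o g == v).

Lemma owns_mem g v : owns g v -> v \in g.
Proof. by case/andP=> ge /eqP <-; apply: efx.1. Qed.

Definition covets (u : T) (g : {set T}) : Prop :=
  [/\ u \in g, 0 < weight u g & forall h, owns h u -> weight u h < weight u g].

Lemma covets_owner_only u v g h : covets u g -> owns g v -> owns h v -> h = g.
Proof.
move=> [ug wg wlt] /andP[ge /eqP og] /andP[he /eqP oh]; apply/eqP/negPn/negP => hg.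
have := efx.2 u v h; rewrite /bundle inE he oh eqxx => /(_ isT).
rewrite /tiered_valuation ler_nat; apply/negP; rewrite -ltnNge.
apply: (@leq_trans (weight u g)).
  rewrite -(prednK wg) ltnS; apply/bigmax_leqP => g'.
  rewrite !inE => /andP[/andP[g'e og'] _].
  by rewrite -ltnS prednK //; apply: wlt; rewrite /owns g'e og'.
by apply: leq_bigmax_cond; rewrite !inE ge ug eq_sym hg og eqxx.
Qed.

Lemma top_covets u v : owns (top u) v -> u \in top u -> u != v -> covets u (top u).
Proof.
move=> /andP[_ /eqP otu] ut uv; split=> //; first by rewrite /weight eqxx.
move=> h /andP[_ /eqP oh]; rewrite /weight eqxx.
have -> : (h == top u) = false by apply: contraNF uv => /eqP hE; rewrite -otu -hE oh.
by case: ifP.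
Qed.

Lemma sec_covets u g : g \in sec u -> u \in g ->
  (forall h, owns h u -> weight u h = 0) -> covets u g.
Proof.
move=> gs ug w0; have wg : 0 < weight u g by rewrite /weight gs; case: ifP.
by split=> // h /w0 ->.
Qed.

Lemma shared_top_owner_only u v h : top u = top v -> u \in top v -> u != v ->
  owns (top v) v -> owns h v -> h = top v.
Proof.
move=> tuv ut uv otv ohv; rewrite -tuv in otv ut *.
exact: covets_owner_only (top_covets otv ut uv) otv ohv.
Qed.

Definition owns_le1 (v : T) (C : {set {set T}}) : Prop :=
  forall g h, g \in C -> h \in C -> owns g v -> owns h v -> g = h.

Lemma cycle_owns_le1 c v u g0 : uniq c -> g0 \in cycle_edges c -> v \in g0 ->
  (owns g0 v -> covets u g0) -> owns_le1 v (cycle_edges c).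
Proof.
move=> Uc g0C vg0 cov g h gC hC og oh.
have := cycle_edges_deg2 Uc gC hC g0C (owns_mem og) (owns_mem oh) vg0.
case/or3P=> /eqP E //; subst g0.
  by rewrite (covets_owner_only (cov og) og oh).
by rewrite (covets_owner_only (cov oh) oh og).
Qed.

Lemma paired_owns_le1 c s v : uniq c -> uniq s -> ~~ odd (size s) ->
  seq_edges s \subset cycle_edges c ->
  {in s, forall z, top z = [set z; partner s z]} -> v \in s ->
  owns_le1 v (cycle_edges c).
Proof.
move=> Uc Us evs sC tops vs; have [us uv uuv vuE] := partner_spec Us evs vs.
set u := partner s v in us uv uuv vuE.
have tuE : top u = [set v; u] by rewrite tops // uuv setUC.
apply: (cycle_owns_le1 (u := u) Uc (subsetP sC _ vuE)); first by rewrite !inE eqxx.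
by rewrite -tuE => ov; apply: top_covets ov _ uv; rewrite tuE !inE eqxx orbT.
Qed.

Lemma walk_owns_forward (s : nat -> T) L :
  (forall i, i < L -> [set s i; s i.+1] \in edges e) ->
  ~~ owns [set s 0; s 1] (s 0) ->
  (forall k, 0 < k < L -> owns [set s k.-1; s k] (s k) ->
     owns [set s k; s k.+1] (s k) -> False) ->
  forall i, i < L -> owns [set s i; s i.+1] (s i.+1).
Proof.
move=> Es n0 nk; elim=> [|i IH] iL;
  case/set2P: (efx.1 _ (Es _ iL)) => ho; rewrite ?/owns ?Es ?ho ?eqxx //.
  by move: n0; rewrite /owns Es // ho eqxx.
by case: (nk i.+1 iL (IH (ltnW iL))); rewrite /owns Es // ho eqxx.
Qed.

Lemma cycle_hub_owns c w : is_cycle e c -> w \in c ->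
  (forall v, v \in c -> v != w -> owns_le1 v (cycle_edges c)) ->
  exists2 g, g \in cycle_edges c & owns g w.
Proof.
move=> cy wc le1; have [r [cyr _ CEr Mr]] := cycle_rot cy wc.
rewrite -CEr in le1 *; case/and3P: (cyr) => _ U Sr.
pose s := nth w (w :: r).
have s_inj i j : i < (size r).+1 -> j < (size r).+1 -> s i = s j -> i = j.
  by move=> ir jr /eqP; rewrite nth_uniq // => /eqP.
have Es i : i < (size r).+1 -> [set s i; s i.+1] \in cycle_edges (w :: r).
  exact: cycle_edges_nth.
have Ee i : i < (size r).+1 -> [set s i; s i.+1] \in edges e.
  by move=> ir; apply: (subsetP (cycle_edges_sub cyr)); apply: Es.
case: (boolP (owns [set s 0; s 1] (s 0))) => [o0|n0].
  by exists [set s 0; s 1]; first exact: Es.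
exists [set s (size r); s (size r).+1]; first exact: Es.
(* Past the end, [nth] returns its default [w], which closes the walk. *)
have sE : s (size r).+1 = w by rewrite /s nth_default.
rewrite -[X in owns _ X]sE.
apply: (walk_owns_forward Ee n0) => // k /andP[k0 kr] o1 o2.
have skc : s k \in c by rewrite -Mr mem_nth.
have skw : s k != w by apply/eqP => /(s_inj k 0 kr) //; lia.
have pkr : k.-1 < (size r).+1 by lia.
have := Es _ pkr; rewrite prednK // => E.
move: (le1 _ skc skw _ _ E (Es k kr) o1 o2) => /eqP; apply/negP/set2_shift_neq.
  by apply/eqP => /s_inj; lia.
apply/eqP; case: (ltnP k.+1 (size r).+1) => [kr'|kr'].
  by move=> /s_inj; lia.
have -> : s k.+1 = s 0 by rewrite /s nth_default.
by move=> /s_inj; move: Sr => /=; lia.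
Qed.

Lemma paired_cycle_hub_owns w r : is_cycle e (w :: r) -> ~~ odd (size r) ->
  {in r, forall z, top z = [set z; partner r z]} ->
  exists2 g, g \in cycle_edges (w :: r) & owns g w.
Proof.
move=> cy evr tops; case/and3P: (cy) => _ U _; case/andP: (U) => _ Ur.
apply: cycle_hub_owns (mem_head _ _) _ => // v; rewrite inE => /orP[/eqP-> | vr _].
  by rewrite eqxx.
apply: paired_owns_le1 Ur evr _ tops vr => //.
exact: seq_edges_sub_cycle.
Qed.

Lemma spoke_hub_owner_only w a m b g h :
  uniq (w :: a :: rcons m b) -> top a = [set a; w] -> top b = [set b; w] ->
  g \in cycle_edges (w :: a :: rcons m b) -> owns g w -> owns h w -> h = g.
Proof.
move=> U ta tb gC og oh; have [aw bw ab _ _] := uniq_spokes U.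
have [eA eB] := cycle_edges_head_last U; rewrite /= last_rcons in eA eB.
have by_top u : top u = [set u; w] -> u != w -> g = top u -> h = g.
  move=> tu uw gE; rewrite gE in og *.
  by apply: (covets_owner_only _ og oh); apply: top_covets og _ uw; rewrite tu setU11.
have wB : w \in [set b; w] by rewrite !inE eqxx orbT.
case/or3P: (cycle_edges_deg2 U gC eA eB (owns_mem og) (setU11 _ _) wB) => /eqP E.
- by apply: (by_top a) => //; rewrite ta setUC.
- by apply: (by_top b) => //; rewrite tb.
- have : a \in [set b; w] by rewrite -E !inE eqxx orbT.
  by rewrite !inE (negbTE ab) (negbTE aw).
Qed.

Lemma spoke_hub_owns_cycle_edge w a m b h :
  is_cycle e (w :: a :: rcons m b) -> ~~ odd (size m) ->
  top a = [set a; w] -> top b = [set b; w] ->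
  {in m, forall z, top z = [set z; partner m z]} ->
  sec w = cycle_edges (w :: a :: rcons m b) -> top w \notin edges e ->
  owns h w -> h \in cycle_edges (w :: a :: rcons m b).
Proof.
set C := cycle_edges _ => cy evm ta tb tops sw tw ohw.
case/and3P: (cy) => _ U _; have [_ _ _ _ Um] := uniq_spokes U.
have [eA eB] := cycle_edges_head_last U; rewrite /= last_rcons -/C in eA eB.
(* Were h off the cycle, w would own no cycle edge and value its bundle at 0. *)
apply: contraT => hC.
have none g : g \in C -> ~~ owns g w.
  by move=> gC; apply: contra hC => og; rewrite (spoke_hub_owner_only U ta tb gC og ohw).
have w0 h' : owns h' w -> weight w h' = 0.
  move=> oh'; have h'C : h' \notin C by apply: contraL oh'; apply: none.
  have h't : h' != top w by apply: contraNneq tw => <-; case/andP: oh'.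
  by rewrite /weight sw (negbTE h'C) (negbTE h't).
have covets_w g : g \in C -> w \in g -> covets w g by move=> gC wg; apply: sec_covets; rewrite ?sw.
have [g gC og] : exists2 g, g \in C & owns g w.
  apply: cycle_hub_owns (mem_head _ _) _ => // v.
  rewrite mem_spokes => /or4P[/eqP-> | /eqP-> | /eqP-> | vm]; rewrite ?eqxx // => _.
  - apply: (cycle_owns_le1 U eA); first by rewrite !inE eqxx orbT.
    by move=> _; apply: covets_w; rewrite ?setU11.
  - apply: (cycle_owns_le1 U eB); first by rewrite setU11.
    by move=> _; apply: covets_w; rewrite ?inE ?eqxx ?orbT.
  - exact: (paired_owns_le1 U Um evm (seq_edges_sub_spokes U) tops vm).
by move: (none _ gC); rewrite og.
Qed.

Lemma joined_path_end_owns x r p :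
  is_cycle e (x :: r) -> ~~ odd (size r) ->
  {in r, forall z, top z = [set z; partner r z]} ->
  path e x p -> uniq (x :: p) -> 0 < size p -> head x p \notin x :: r ->
  (forall k, k <= size p -> mate k <= size p ->
     top (nth x (x :: p) k) = [set nth x (x :: p) k; nth x (x :: p) (mate k)]) ->
  owns [set nth x (x :: p) (size p).-1; last x p] (last x p).
Proof.
move=> cy evr tops pa Up p0 p1r topp; set L := size p in p0 topp *.
pose s := nth x (x :: p).
have s_inj i j : i <= L -> j <= L -> s i = s j -> i = j.
  by move=> iL jL /eqP; rewrite nth_uniq // => /eqP.
have Ee i : i < L -> [set s i; s i.+1] \in edges e.
  by move=> iL; apply: edge_of_rel; exact: (pathP x pa i iL).
have owner_only k h : k <= L -> mate k <= L ->
    owns (top (s k)) (s k) -> owns h (s k) -> h = top (s k).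
  move=> kL mkL; apply: (shared_top_owner_only (u := s (mate k))).
  - by rewrite !topp ?mateK // setUC.
  - by rewrite topp // !inE eqxx orbT.
  - by apply/eqP => /(s_inj _ _ mkL kL) mE; move: (mate_neq k); rewrite mE eqxx.
have [g1 g1C og1] := paired_cycle_hub_owns cy evr tops.
have n0 : ~~ owns [set s 0; s 1] (s 0).
  apply/negP => o0; have t0 : top (s 0) = [set s 0; s 1] by rewrite topp.
  rewrite -t0 in o0; have := owner_only 0 _ isT p0 o0 og1; rewrite t0 => g1E.
  have Ux : uniq (x :: r) by case/and3P: cy.
  have : s 1 \in x :: r by apply: (mem_cycle_edges Ux g1C); rewrite g1E !inE eqxx orbT.
  by rewrite /s /= nth0 (negbTE p1r).
rewrite (last_nth x); have -> : nth x (x :: p) L = s L.-1.+1 by rewrite prednK.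
have pL : L.-1 < L by rewrite ltn_predL.
apply: (walk_owns_forward Ee n0 _ pL) => k /andP[k0 kL] o1 o2.
have km : mate k <= L by case: (mate_adjacent k); lia.
have tk : top (s k) = [set s k; s (mate k)] by rewrite topp // ltnW.
have neq : [set s k.-1; s k] != [set s k; s k.+1].
  by apply: set2_shift_neq; apply/eqP => /s_inj; lia.
have ot : owns (top (s k)) (s k).
  rewrite tk; case: (mate_adjacent k) => mE; first by rewrite mE.
  have -> : mate k = k.-1 by lia.
  by rewrite setUC.
by move: neq; rewrite (owner_only k _ (ltnW kL) km ot o1) (owner_only k _ (ltnW kL) km ot o2) eqxx.
Qed.

Lemma shared_edge_not_owned x y r1 r2 a :
  is_cycle e (x :: r1) -> is_cycle e (y :: r2) ->
  ~~ odd (size r1) -> ~~ odd (size r2) -> a = [set x; y] -> y \in r1 ->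
  cycle_edges (x :: r1) :&: cycle_edges (y :: r2) = [set a] ->
  {in r1, forall z, top z = [set z; partner r1 z]} ->
  {in r2, forall z, top z = [set z; partner r2 z]} ->
  sec y = [set a] -> ~~ owns a x.
Proof.
move=> cy1 cy2 ev1 ev2 aE yr1 I tops1 tops2 sy; apply/negP => oax.
case/and3P: (cy1) => _ U1 _; case/andP: (U1) => xr1 Ur1.
have xy : x != y by apply: contraNneq xr1 => ->.
have nay : ~~ owns a y by case/andP: oax => _ /eqP oa; rewrite /owns oa (negbTE xy) andbF.
have [aC1 aC2] : a \in cycle_edges (x :: r1) /\ a \in cycle_edges (y :: r2).
  by apply/andP; rewrite -in_setI I set11.
have sub1 : seq_edges r1 \subset cycle_edges (x :: r1).
  exact: seq_edges_sub_cycle.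
have [g2 g2C og2] := paired_cycle_hub_owns cy2 ev2 tops2.
have [ur1 uy uuy yuE] := partner_spec Ur1 ev1 yr1; set u := partner r1 y in ur1 uy uuy yuE.
have ty : top y = [set y; u] by rewrite tops1.
have xty : x \notin top y.
  by rewrite ty !inE negb_or xy /=; apply: contraNneq xr1 => ->.
have ny : ~~ owns (top y) y.
  apply/negP => oty; have tuy : top u = top y by rewrite ty tops1 // uuy setUC.
  have uty : u \in top y by rewrite ty !inE eqxx orbT.
  have g2E := shared_top_owner_only tuy uty uy oty og2.
  have : top y \in [set a] by rewrite -I inE -{2}g2E g2C ty (subsetP sub1 _ yuE).
  by rewrite inE => /eqP tyE; move: xty; rewrite tyE aE !inE eqxx.
have x_only h : owns h x -> h = a.
  apply: (covets_owner_only (u := y) _ oax); apply: sec_covets.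
  - by rewrite sy inE.
  - by rewrite aE !inE eqxx orbT.
  move=> h' oh'; rewrite /weight sy inE.
  have -> : (h' == top y) = false by apply: contraNF ny => /eqP <-.
  have -> // : (h' == a) = false.
  by apply: contraTF oh' => /eqP ->.
have [g gC og] : exists2 g, g \in cycle_edges (x :: r1) & owns g y.
  apply: cycle_hub_owns; rewrite ?inE ?yr1 ?orbT // => v; rewrite inE => /orP[/eqP-> _ | vr _].
    by move=> g h _ _ /x_only -> /x_only ->.
  exact: (paired_owns_le1 U1 Ur1 ev1 sub1 tops1 vr).
have ya : y \in a by rewrite aE !inE eqxx orbT.
have yty : y \in [set y; u] by rewrite !inE eqxx.
case/or3P: (cycle_edges_deg2 U1 gC aC1 (subsetP sub1 _ yuE) (owns_mem og) ya yty) => /eqP E.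
- by move: nay; rewrite -E og.
- by move: ny; rewrite ty -E og.
- by move: xty; rewrite ty -E aE !inE eqxx.
Qed.
End TieredValuation.

Section Obstructions.
Variables (T : finType) (e : rel T) (R : realType).
Hypothesis eirr : irreflexive e.

Lemma share_edge_not_strongly_EFX :
  two_odd_cycles_share_edge e -> ~ strongly_EFX_orientable R e.
Proof.
case=> c1 [c2 [a [[cy1 cy2 od1 od2] [EI VI _ _]]]] SO.
have [aC1 _] : a \in cycle_edges c1 /\ a \in cycle_edges c2.
  by apply/andP; rewrite -in_setI EI set11.
have [cyc1 U1 _] := and3P cy1.
move: (aC1); rewrite cycle_edges_next // => /imsetP[x xc1 aE].
set y := next c1 x in aE.
have exy : e x y := next_cycle cyc1 xc1.
have xy : x != y by apply: contraTneq exy => <-; rewrite eirr.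
have [xa ya] : x \in a /\ y \in a by rewrite aE !inE !eqxx orbT.
move: (xa) (ya); rewrite -VI !inE => /andP[_ xc2] /andP[yc1 yc2].
have [r1 [cy1' ev1 CE1 M1]] := odd_cycle_rot cy1 od1 xc1.
have [r2 [cy2' ev2 CE2 M2]] := odd_cycle_rot cy2 od2 yc2.
have xr1 : x \notin r1 by case/and3P: cy1' => _ /andP[].
have yr2 : y \notin r2 by case/and3P: cy2' => _ /andP[].
have yr1 : y \in r1 by move: yc1; rewrite -M1 inE eq_sym (negbTE xy).
have xr2 : x \in r2 by move: xc2; rewrite -M2 inE (negbTE xy).
have r21 z : z \in r2 -> z \notin r1.
  move=> zr2; apply/negP => zr1.
  have : z \in a by rewrite -VI !inE -M1 -M2 !inE zr1 zr2 !orbT.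
  rewrite aE !inE => /orP[]/eqP zE; first by move: zr1; rewrite zE (negbTE xr1).
  by move: zr2; rewrite zE (negbTE yr2).
pose top v := if v \in r1 then [set v; partner r1 v] else [set v; partner r2 v].
have [o efx] := SO _ (tiered_valuation_graphical e R top (fun=> [set a])).
have tops1 : {in r1, forall z, top z = [set z; partner r1 z]} by move=> z zr; rewrite /top zr.
have tops2 : {in r2, forall z, top z = [set z; partner r2 z]}.
  by move=> z zr; rewrite /top (negbTE (r21 _ zr)).
have I : cycle_edges (x :: r1) :&: cycle_edges (y :: r2) = [set a] by rewrite CE1 CE2.
have ae : a \in edges e := subsetP (cycle_edges_sub cy1) _ aC1.
have owns_a : owns e o a (o a) by rewrite /owns ae eqxx.
have := efx.1 a ae; rewrite {2}aE !inE => /orP[]/eqP oa; rewrite oa in owns_a.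
  by move: owns_a; apply/negP/(shared_edge_not_owned efx cy1' cy2' ev1 ev2 aE yr1 I).
move: owns_a; apply/negP/(shared_edge_not_owned efx cy2' cy1' ev2 ev1 _ xr2 _ tops2 tops1 erefl).
- by rewrite aE setUC.
by rewrite setIC.
Qed.

Lemma share_vertex_not_strongly_EFX :
  two_odd_cycles_share_vertex e -> ~ strongly_EFX_orientable R e.
Proof.
case=> c1 [c2 [w [[cy1 cy2 od1 od2] [I _ _]]]] SO.
have : w \in cycle_verts c1 :&: cycle_verts c2 by rewrite I set11.
rewrite !inE => /andP[wc1 wc2].
have only_w z : z \in c1 -> z \in c2 -> z = w.
  by move=> z1 z2; apply/set1P; rewrite -I !inE z1 z2.
have [r1 [cy1' ev1 _ M1]] := odd_cycle_rot cy1 od1 wc1.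
have [a [m [b [cy2' evm _ M2]]]] := odd_cycle_spokes cy2 od2 wc2.
case/and3P: (cy1') => _ /andP[wr1 _] _; case/and3P: (cy2') => _ U2 _.
have [aw bw _ [wm am bm] _] := uniq_spokes U2.
have notr1 z : z \in c2 -> z != w -> z \notin r1.
  by move=> z2 zw; apply: contra zw => zr1; rewrite (only_w z) // -M1 inE zr1 orbT.
have [ac2 bc2] : a \in c2 /\ b \in c2 by rewrite -!M2 !mem_spokes !eqxx !orbT.
pose top v := if v \in r1 then [set v; partner r1 v]
  else if v \in m then [set v; partner m v] else if v == w then set0 else [set v; w].
have [o efx] := SO _ (tiered_valuation_graphical e R top (fun=> cycle_edges (w :: a :: rcons m b))).
have [g1 g1C og1] : exists2 g, g \in cycle_edges (w :: r1) & owns e o g w.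
  by apply: (paired_cycle_hub_owns efx cy1' ev1) => z zr; rewrite /top zr.
have : g1 \in cycle_edges (w :: a :: rcons m b).
  apply: (spoke_hub_owns_cycle_edge efx cy2' evm) og1 => //.
  - by rewrite /top (negbTE (notr1 _ ac2 aw)) (negbTE am) (negbTE aw).
  - by rewrite /top (negbTE (notr1 _ bc2 bw)) (negbTE bm) (negbTE bw).
  - move=> z zm; have zc2 : z \in c2 by rewrite -M2 mem_spokes zm !orbT.
    have zw : z != w by apply: contraNneq wm => <-.
    by rewrite /top (negbTE (notr1 _ zc2 zw)) zm.
  - by rewrite /top (negbTE wr1) (negbTE wm) eqxx set0_notin_edges.
move=> g1C2; move/negP: (edge_not_sub1 eirr w (subsetP (cycle_edges_sub cy1') _ g1C)); apply.
apply/subsetP => z zg; rewrite inE; apply/eqP/only_w.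
- by rewrite -M1; apply: mem_cycle_edges g1C zg; case/and3P: cy1'.
- by rewrite -M2; apply: mem_cycle_edges g1C2 zg.
Qed.

Section JoinedPath.
Variables (x : T) (r1 c2 p : seq T).
Hypotheses (cy1 : is_cycle e (x :: r1)) (ev1 : ~~ odd (size r1)).
Hypotheses (cy2 : is_cycle e c2) (od2 : odd (size c2)).
Hypotheses (pa : path e x p) (Up : uniq (x :: p)) (p0 : 0 < size p).
Hypothesis yc2 : last x p \in c2.
Hypothesis disj : forall z, z \in x :: r1 -> z \notin c2.
Hypothesis interior : all (fun v => (v \notin x :: r1) && (v \notin c2)) (behead (belast x p)).

Local Notation L := (size p).
Local Notation y := (last x p).
Local Notation s := (nth x (x :: p)).

Lemma path_notin_c1 k : 0 < k <= L -> s k \notin x :: r1.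
Proof.
case/andP=> k0; rewrite leq_eqVlt => /orP[/eqP-> | kL].
  by rewrite -(last_nth x); apply: contraL yc2; apply: disj.
have kint : 0 < k < L by rewrite k0.
by case/andP: (allP interior _ (mem_interior x kint)).
Qed.

Lemma path_notin_c2 k : k < L -> s k \notin c2.
Proof.
case: k => [_ | k kL]; first by apply: disj; rewrite mem_head.
by case/andP: (allP interior _ (mem_interior x (kL : 0 < k.+1 < L))).
Qed.

Lemma c2_notin_path z : z \in c2 -> z != y -> z \notin x :: p.
Proof.
move=> zc2 zy; apply/negP => /(nthP x)[k kL zE]; move: zc2; rewrite -zE.
case: (ltnP k L) => [kL' | Lk]; first by rewrite (negbTE (path_notin_c2 kL')).
move: zy; rewrite -zE (last_nth x).
have -> : k = L by move: kL => /=; lia.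
by rewrite eqxx.
Qed.

Lemma path_notin_r1 k : k <= L -> s k \notin r1.
Proof.
case: k => [_ | k kL]; first by case/and3P: cy1 => _ /andP[].
by apply: contra (path_notin_c1 (k := k.+1) kL) => kr1; rewrite inE kr1 orbT.
Qed.

(* Vertices of the first cycle other than x are paired along it and path
   vertices are paired consecutively from x, the end y staying unpaired when
   the path has an odd number of vertices; [top2] takes care of the rest. *)
Definition joined_top (top2 : T -> {set T}) (v : T) : {set T} :=
  if v \in r1 then [set v; partner r1 v]
  else if (v \in x :: p) && (mate (index v (x :: p)) <= L) then [set v; partner (x :: p) v]
  else top2 v.

Lemma joined_top_path top2 k : k <= L -> mate k <= L ->
  joined_top top2 (s k) = [set s k; s (mate k)].
Proof.
move=> kL mkL; rewrite /joined_top (negbTE (path_notin_r1 kL)) mem_nth //.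
by rewrite index_uniq // mkL partner_nth.
Qed.

Lemma joined_top_c2 top2 z : z \in c2 -> z != y -> joined_top top2 z = top2 z.
Proof.
move=> zc2 zy; rewrite /joined_top (negbTE (c2_notin_path zc2 zy)) /=.
by have -> : z \in r1 = false by apply: contraTF zc2 => zr1; apply: disj; rewrite inE zr1 orbT.
Qed.

Lemma joined_top_end_owns top2 sec o :
  EFX_orientation e (tiered_valuation e R (joined_top top2) sec) o ->
  owns e o [set s L.-1; y] y.
Proof.
move=> efx; apply: (joined_path_end_owns efx cy1 ev1 _ pa Up p0).
- by move=> z zr1; rewrite /joined_top zr1.
- by rewrite -nth0 (path_notin_c1 (k := 1)).
- exact: joined_top_path.
Qed.

Lemma odd_joined_path_not_strongly_EFX : odd L -> ~ strongly_EFX_orientable R e.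
Proof.
move=> oL SO; have [r2 [cy2' ev2 _ M2]] := odd_cycle_rot cy2 od2 yc2.
pose top := joined_top (fun v => [set v; partner r2 v]).
have [o efx] := SO _ (tiered_valuation_graphical e R top (fun=> set0)).
have [g2 g2C og2] : exists2 g, g \in cycle_edges (y :: r2) & owns e o g y.
  apply: (paired_cycle_hub_owns efx cy2' ev2) => z zr2.
  apply: joined_top_c2; first by rewrite -M2 inE zr2 orbT.
  by apply: contraTneq zr2 => ->; case/and3P: cy2' => _ /andP[].
have sL : s L = y by rewrite (last_nth x).
have mL : mate L = L.-1 by rewrite /mate oL.
have ty : top y = [set y; s L.-1] by rewrite -sL /top joined_top_path ?mL ?leq_pred.
have mL1 : mate L.-1 = L by rewrite -mL mateK.
have tL1 : top (s L.-1) = top y by rewrite ty /top joined_top_path ?mL1 ?leq_pred // sL setUC.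
have nL1 : s L.-1 \notin c2 by apply: path_notin_c2; rewrite ltn_predL.
have g2E : g2 = top y.
  apply: (shared_top_owner_only efx tL1 _ _ _ og2).
  - by rewrite ty !inE eqxx orbT.
  - by apply: contraNneq nL1 => ->.
  - by rewrite ty setUC; exact: (joined_top_end_owns efx).
case/and3P: cy2' => _ U2 _; move: nL1; rewrite -M2.
by rewrite (mem_cycle_edges U2 g2C) // g2E ty !inE eqxx orbT.
Qed.

Lemma even_joined_path_not_strongly_EFX : ~~ odd L -> ~ strongly_EFX_orientable R e.
Proof.
move=> eL SO; have [a [m [b [cy2' evm _ M2]]]] := odd_cycle_spokes cy2 od2 yc2.
case/and3P: (cy2') => _ U2 _; have [ay bY _ [ym am bm] _] := uniq_spokes U2.
have inc2 z : z \in c2 = [|| z == y, z == a, z == b | z \in m] by rewrite -M2 mem_spokes.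
pose top := joined_top (fun v => if v \in m then [set v; partner m v]
  else if v == y then set0 else [set v; y]).
pose sec (_ : T) := cycle_edges (y :: a :: rcons m b).
have [o efx] := SO _ (tiered_valuation_graphical e R top sec).
have : [set s L.-1; y] \in cycle_edges (y :: a :: rcons m b).
  apply: (spoke_hub_owns_cycle_edge efx cy2' evm _ _ _ erefl _ (joined_top_end_owns efx)).
  - by rewrite /top joined_top_c2 ?inc2 ?eqxx ?orbT // (negbTE am) (negbTE ay).
  - by rewrite /top joined_top_c2 ?inc2 ?eqxx ?orbT // (negbTE bm) (negbTE bY).
  - move=> z zm; have zy : z != y by apply: contraNneq ym => <-.
    by rewrite /top joined_top_c2 ?inc2 ?zm ?orbT.
  have yr1 : y \notin r1 by apply: contraTN yc2 => yr1; apply: disj; rewrite inE yr1 orbT.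
  have iy : index y (x :: p) = L by rewrite (last_nth x) index_uniq.
  rewrite /top /joined_top (negbTE yr1) iy /mate (negbTE eL) ltnn andbF.
  by rewrite (negbTE ym) eqxx set0_notin_edges.
move=> hC; have := mem_cycle_edges U2 hC (setU11 _ _); rewrite M2.
by apply/negP/path_notin_c2; rewrite ltn_predL.
Qed.
End JoinedPath.

Lemma joined_path_not_strongly_EFX :
  two_odd_cycles_joined_by_path e -> ~ strongly_EFX_orientable R e.
Proof.
case=> c1 [c2 [x [p [[cy1 cy2 od1 od2] [VI [[pa Up p0] [xc1 yc2 Aint]] _ _]]]]].
have [r1 [cy1' ev1 _ M1]] := odd_cycle_rot cy1 od1 xc1.
have disj z : z \in x :: r1 -> z \notin c2.
  rewrite M1 => zc1; apply/negP => zc2.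
  have : z \in cycle_verts c1 :&: cycle_verts c2 by rewrite !inE zc1 zc2.
  by rewrite VI inE.
have interior : all (fun v => (v \notin x :: r1) && (v \notin c2)) (behead (belast x p)).
  by apply: sub_all Aint => v; rewrite M1.
case: (boolP (odd (size p))) => oL.
  exact: odd_joined_path_not_strongly_EFX cy1' ev1 cy2 od2 pa Up p0 yc2 disj interior oL.
exact: even_joined_path_not_strongly_EFX cy1' ev1 cy2 od2 pa Up p0 yc2 disj interior oL.
Qed.
End Obstructions.

Theorem mainTheorem13 (R : realType) (T : finType) (e : rel T) :
  symmetric e -> irreflexive e ->
  two_odd_cycles_share_edge e \/ two_odd_cycles_share_vertex e \/
  two_odd_cycles_joined_by_path e ->
  ~ strongly_EFX_orientable R e.
Proof.
move=> _ eirr [|[|]].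
- exact: share_edge_not_strongly_EFX.
- exact: share_vertex_not_strongly_EFX.
- exact: joined_path_not_strongly_EFX.
Qed.
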